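(* Let $L$ be a finite lattice, $\varphi\in M_1(L)$, and let $(a_1,\dots,a_n)$ be a monotone path in $L$. Set $\varphi_0=\varphi$ and $\varphi_i=\Lambda_{a_i}\varphi_{i-1}$ for $i=1,\dots,n$. Let $\Psi_i\in M_\infty(\mathcal L)$ satisfy $\Pi(\Psi_i)=\lambda(\varphi_i;a_{i+1},\cdot)$ for $i=0,\dots,n-1$, let $\Psi_n\in M_\infty(\mathcal L)$ satisfy $\Pi(\Psi_n)=\varphi_n$, and put $\Phi=\sum_{i=0}^n\Psi_i$. For $x\in L$ and $1\le k\le n$ let $\pi^x_{a_1,\ldots,a_k}$ be the function on $\mathcal L$ equal to $1$ at $V$ if $x\in V$ and $a_i\notin V$ for all $i=1,\dots,k$, and $0$ otherwise. Then $$\Lambda_{a_1,\ldots,a_k}\varphi(x)=\Phi\big(\pi^x_{a_1,\ldots,a_k}\big)\qquad\text{for all }x\in L\text{ and }k=1,\dots,n.$$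
   Context: $L$ is a finite lattice with join $\vee$. $M_1(L)$ is the set of nonnegative monotone real functions on $L$. A path from $a$ to $b$ is a sequence $H=(h_0,\dots,h_m)$ of distinct elements of $L$ with $h_0=a$, $h_m=b$; $\varphi(H)=\sum_{i=0}^m\varphi(h_i)-\sum_{i=1}^m\varphi(h_{i-1}\vee h_i)$; $\lambda(\varphi;a,b)=\max\{\varphi(H): H\text{ a path from }a\text{ to }b\}$; $\Lambda_a\varphi(x)=\varphi(x)-\lambda(\varphi;a,x)$ and $\Lambda_{a_1,\ldots,a_k}\varphi=\Lambda_{a_k}(\Lambda_{a_1,\ldots,a_{k-1}}\varphi)$; $\Lambda_a$ maps $M_1(L)$ into itself and so does $\lambda(\varphi;a,\cdot)$ for $\varphi\in M_1(L)$. A monotone path is a sequence $(a_1,\dots,a_n)$ of distinct elements of $L$ such that $i<j$ whenever $a_i<a_j$. $\mathcal L$ is the set of nonempty up-sets of $L$, ordered by $U\preceq V$ iff $U\supseteq V$ (meet = union). $M_\infty(\mathcal L)$ is the set of nonnegative completely monotone functions on $(\mathcal L,\preceq)$; $\Pi(\Psi)(x)=\Psi(\{y:y\ge x\})$. Every element of $M_1(L)$ is $\Pi(\Psi)$ for some $\Psi\in M_\infty(\mathcal L)$. For $\Phi\in M_\infty(\mathcal L)$ with Möbius inverse $F$ (the unique $F$ with $\Phi(U)=\sum_{V\preceq U}F(V)$) and $g$ a real function on $\mathcal L$, $\Phi(g)=\sum_{V\in\mathcal L}F(V)g(V)$. *)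

From HB Require Import structures.
From mathcomp Require Import all_boot all_order all_algebra.
Set Implicit Arguments. Unset Strict Implicit. Unset Printing Implicit Defensive.
Import Order.TTheory GRing.Theory Num.Theory.
Local Open Scope ring_scope.

Section Defs.
Variables (d : Order.disp_t) (L : finLatticeType d) (R : realFieldType).

Definition inM1 (phi : L -> R) : Prop :=
  (forall x, 0 <= phi x) /\ (forall x y : L, (x <= y)%O -> phi x <= phi y).

Definition pathval (phi : L -> R) (a : L) (s : seq L) : R :=
  \sum_(h <- a :: s) phi h - \sum_(p <- zip (a :: s) s) phi (Order.join p.1 p.2).

Definition is_path_from (a b : L) (s : seq L) : bool := uniq (a :: s) && (last a s == b).

(* A path a :: s has size s < #|L|; the initial value of the max is the value
   of the path (a) if a = b, or (a, b) otherwise, which is itself a path. *)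
Definition lam (phi : L -> R) (a b : L) : R :=
  \big[Num.max/pathval phi a (if a == b then [::] else [:: b])]_(m < #|L|.+1)
     \big[Num.max/pathval phi a (if a == b then [::] else [:: b])]_(t : m.-tuple L
          | is_path_from a b t) pathval phi a t.

Definition Lam (a : L) (phi : L -> R) : L -> R := fun x => phi x - lam phi a x.

Definition Lams (s : seq L) (phi : L -> R) : L -> R :=
  foldl (fun psi b => Lam b psi) phi s.

(* the set \mathcal L of nonempty up-sets of L; U precedes V iff V \subset U *)
Definition isUp (U : {set L}) : bool :=
  (U != set0) && [forall x, forall y, ((x \in U) && (x <= y)%O) ==> (y \in U)].

Definition PiL (Psi : {set L} -> R) : L -> R := fun x => Psi [set y | (x <= y)%O].

(* M_infty(\mathcal L): nonnegative completely monotone functions on (\mathcal L, precedes):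
   for every k and all U, U_1..U_k in \mathcal L with U_i precedes U,
   Psi(U) >= sum_{emptyset <> I} (-1)^{|I|+1} Psi(meet_{i in I} U_i),
   where the meet in (\mathcal L, precedes) is the union. *)
Definition inMinf (Psi : {set L} -> R) : Prop :=
  (forall U, isUp U -> 0 <= Psi U) /\
  (forall (k : nat) (U : {set L}) (Us : 'I_k -> {set L}),
      isUp U -> (forall i, isUp (Us i)) -> (forall i, U \subset Us i) ->
      \sum_(I : {set 'I_k} | I != set0)
          (-1) ^+ (#|I|.+1) * Psi (\bigcup_(i in I) Us i) <= Psi U).

(* Moebius inverse: the unique F with Phi(U) = sum_{V in \mathcal L, V precedes U} F(V),
   i.e. F(U) = Phi(U) - sum_{V in \mathcal L, U proper subset V} F(V),
   computed by recursion of sufficient depth. *)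
Fixpoint mobk (Phi : {set L} -> R) (k : nat) (U : {set L}) : R :=
  match k with
  | 0 => 0
  | k'.+1 => Phi U - \sum_(V : {set L} | isUp V && (U \proper V)) mobk Phi k' V
  end.

Definition mobius (Phi : {set L} -> R) (U : {set L}) : R := mobk Phi #|L|.+1 U.

(* Phi(g) = sum_{V in \mathcal L} F(V) g(V) *)
Definition integ (Phi : {set L} -> R) (g : {set L} -> R) : R :=
  \sum_(V : {set L} | isUp V) mobius Phi V * g V.

Definition piX (x : L) (s : seq L) (V : {set L}) : R :=
  if (x \in V) && all (fun b => b \notin V) s then 1 else 0.

End Defs.

(* a : 'I_n -> L is a monotone path (a_1,..,a_n) (0-indexed): distinct, and
   i < j whenever a_i < a_j *)
Definition monotone_path d (L : finLatticeType d) n (a : 'I_n -> L) : Prop :=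
  injective a /\ (forall i j : 'I_n, (a i < a j)%O -> (i < j)%N).

Definition apref d (L : finLatticeType d) n (a : 'I_n -> L) (k : nat) : seq L :=
  [seq a j | j <- take k (enum 'I_n)].
Arguments piX {d L R}.

(* Since phi_m = phi_{m+1} + lambda(phi_m; a_{m+1}, .), the hypotheses telescope to
   phi_m = Pi(Psi_m) + ... + Pi(Psi_n).  Complete monotonicity makes the Moebius inverse
   F_l of Psi_l nonnegative, and Pi(Psi_l)(x) is the F_l-mass of the up-sets containing x;
   so every phi_m is monotone and lambda(phi_m; a, a) = phi_m(a).  Hence Pi(Psi_l) is
   maximal at a_{l+1}, forcing F_l to live on up-sets containing a_{l+1}; and
   phi_i(a_i) = 0 forces F_l to vanish on up-sets containing a_i for i <= l.  With these
   support conditions pi^x_{a_1..a_k} reduces to the indicator of x under F_l for l >= k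
   and to 0 for l < k. *)
From mathcomp Require Import all_boot all_order all_algebra.
From mathcomp Require Import zify ring lra.
Set Implicit Arguments. Unset Strict Implicit. Unset Printing Implicit Defensive.
Import Order.TTheory GRing.Theory Num.Theory.
Local Open Scope ring_scope.

Lemma sum_sign_subset (R : comPzRingType) (I : finType) (T : {set I}) :
  \sum_(J : {set I}) (-1) ^+ #|J| * (J \subset T)%:R = (T == set0)%:R :> R.
Proof.
have := bigA_distr 1 +%R (fun i => if i \in T then -1 else 0 : R) (fun _ => 1).
have -> : \prod_i ((if i \in T then -1 else 0) + 1) = (T == set0)%:R :> R.
  have [-> | /set0Pn[i Ti]] := eqVneq T set0.
    by rewrite big1 // => i _; rewrite in_set0 add0r.
  by rewrite (bigD1 i) //= Ti addNr mul0r.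
move=> ->; apply: eq_bigr => J _.
have [sJT | /subsetPn[i Ji notTi]] := boolP (J \subset T).
  rewrite mulr1 (eq_bigr (fun i => if i \in J then -1 else 1)); last first.
    by move=> i _; case: ifP => // Ji; rewrite (subsetP sJT i Ji).
  by rewrite -big_mkcond prodr_const.
by rewrite mulr0 (bigD1 i) //= Ji (negbTE notTi) mul0r.
Qed.

Lemma sum_sign_subset_neq0 (R : comPzRingType) (I : finType) (T : {set I}) :
  \sum_(J : {set I} | J != set0) (-1) ^+ #|J|.+1 * (J \subset T)%:R
  = (T != set0)%:R :> R.
Proof.
have := sum_sign_subset R T; rewrite (bigD1 set0) //= cards0 sub0set mul1r => sumT.
under eq_bigr do rewrite exprS mulN1r mulNr.
rewrite sumrN -[X in - X](addKr 1) sumT.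
by case: (T == set0); rewrite /= ?addNr ?oppr0 // addr0 opprK.
Qed.

Section MobiusInversion.
Variables (d : Order.disp_t) (L : finLatticeType d) (R : realFieldType).
Implicit Types (U V W : {set L}) (x y z : L).

Lemma isUp_closed V y z : isUp V -> y \in V -> (y <= z)%O -> z \in V.
Proof.
case/andP=> _ /forallP/(_ y)/forallP/(_ z)/implyP up_V Vy le_yz.
by apply: up_V; rewrite Vy.
Qed.

Lemma isUp_principal y : isUp [set z | (y <= z)%O].
Proof.
apply/andP; split; first by apply/set0Pn; exists y; rewrite inE.
apply/forallP => u; apply/forallP => v; apply/implyP.
by rewrite !inE => /andP[]; apply: le_trans.
Qed.

Lemma isUp_bigcup k (I : {set 'I_k}) (Us : 'I_k -> {set L}) :
  I != set0 -> (forall i, isUp (Us i)) -> isUp (\bigcup_(i in I) Us i).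
Proof.
case/set0Pn => i Ii up_Us; apply/andP; split.
  have /andP[/set0Pn[x Uix] _] := up_Us i.
  by apply/set0Pn; exists x; apply/bigcupP; exists i.
apply/forallP => x; apply/forallP => y; apply/implyP => /andP[/bigcupP[j Ij Ujx] le_xy].
by apply/bigcupP; exists j => //; apply: isUp_closed le_xy.
Qed.

Variable Psi : {set L} -> R.

Lemma mobk_stable k U : (#|L| < k + #|U|)%N -> mobk Psi k.+1 U = mobk Psi k U.
Proof.
elim: k U => [|k IHk] U ltLkU.
  by move: (leq_ltn_trans (max_card U) ltLkU); rewrite add0n ltnn.
rewrite [LHS]/= [RHS]/=; congr (_ - _); apply: eq_bigr => V /andP[_ ltUV].
by apply: IHk; have := proper_card ltUV; lia.
Qed.

Lemma mobiusE U :
  mobius Psi U = Psi U - \sum_(V | isUp V && (U \proper V)) mobius Psi V.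
Proof.
rewrite /mobius [LHS]/=; congr (_ - _); apply: eq_bigr => V /andP[_ ltUV].
by rewrite mobk_stable //; have := proper_card ltUV; lia.
Qed.

Lemma sum_mobius_superset U :
  isUp U -> Psi U = \sum_(V | isUp V && (U \subset V)) mobius Psi V.
Proof.
move=> up_U; rewrite (bigD1 U) /= ?up_U ?subxx // (mobiusE U).
rewrite (eq_bigl (fun V => isUp V && (U \proper V))); first by rewrite subrK.
move=> V; rewrite properEneq eq_sym.
by case: (isUp V); case: (U \subset V); rewrite ?andbT ?andbF.
Qed.

Lemma PiL_mobius y : PiL Psi y = \sum_(V | isUp V && (y \in V)) mobius Psi V.
Proof.
rewrite /PiL (sum_mobius_superset (isUp_principal y)); apply: eq_bigl => V.
apply: andb_id2l => up_V; apply/subsetP/idP => [sub | Vy z]; first by apply: sub; rewrite inE.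
by rewrite inE; apply: isUp_closed.
Qed.

Lemma sum_sign_bigcup k (Us : 'I_k -> {set L}) : (forall i, isUp (Us i)) ->
  \sum_(I : {set 'I_k} | I != set0) (-1) ^+ #|I|.+1 * Psi (\bigcup_(i in I) Us i)
  = \sum_(W | isUp W && [exists i, Us i \subset W]) mobius Psi W.
Proof.
move=> up_Us.
transitivity (\sum_(I : {set 'I_k} | I != set0) \sum_(W | isUp W)
    (-1) ^+ #|I|.+1 * ((I \subset [set i | Us i \subset W])%:R * mobius Psi W)).
  apply: eq_bigr => I nzI; rewrite (sum_mobius_superset (isUp_bigcup nzI up_Us)).
  rewrite mulr_sumr big_mkcondr; apply: eq_bigr => W _.
  have -> : (\bigcup_(i in I) Us i \subset W) = (I \subset [set i | Us i \subset W]).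
    apply/bigcupsP/subsetP => sub i Ii; first by rewrite inE sub.
    by move: (sub i Ii); rewrite inE.
  by case: ifP; rewrite ?mul1r ?mul0r ?mulr0.
rewrite exchange_big /= [RHS]big_mkcondr; apply: eq_bigr => W _.
under eq_bigr do rewrite mulrA.
rewrite -mulr_suml sum_sign_subset_neq0.
have -> : ([set i | Us i \subset W] != set0) = [exists i, Us i \subset W].
  by apply/set0Pn/existsP => -[i Wi]; exists i; move: Wi; rewrite inE.
by case: ifP; rewrite ?mul1r ?mul0r.
Qed.

Hypothesis Psi_cm : inMinf Psi.

(* Complete monotonicity at U, applied to the family of all up-sets strictly above U. *)
Lemma mobius_ge0 U : isUp U -> 0 <= mobius Psi U.
Proof.
move=> up_U; case: Psi_cm => _ cm.
pose S := [set W | isUp W && (U \proper W)].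
pose Us (i : 'I_#|S|) := enum_val i.
have SUs i : isUp (Us i) && (U \proper Us i) by move: (enum_valP i); rewrite inE.
have up_Us i : isUp (Us i) by case/andP: (SUs i).
have lt_Us i : U \proper Us i by case/andP: (SUs i).
have := cm _ U Us up_U up_Us (fun i => proper_sub (lt_Us i)).
rewrite sum_sign_bigcup // (mobiusE U) subr_ge0.
congr (_ <= _); apply: eq_bigl => W; apply: andb_id2l => up_W.
apply/existsP/idP => [[i le_iW] | ltUW]; first exact: proper_sub_trans (lt_Us i) le_iW.
have SW : W \in S by rewrite inE up_W ltUW.
by exists (enum_rank_in SW W); rewrite /Us enum_rankK_in.
Qed.

Lemma PiL_ge0 y : 0 <= PiL Psi y.
Proof. by rewrite PiL_mobius; apply: sumr_ge0 => V /andP[up_V _]; apply: mobius_ge0. Qed.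

Lemma PiL_monotone y z : (y <= z)%O -> PiL Psi y <= PiL Psi z.
Proof.
move=> le_yz; rewrite !PiL_mobius !(big_mkcondr _ _ (@isUp _ L)); apply: ler_sum => V up_V.
have [Vy | _] := boolP (y \in V); first by rewrite (isUp_closed up_V Vy le_yz).
by case: (z \in V) => //; apply: mobius_ge0.
Qed.

Lemma mobius_le_PiL V y : isUp V -> y \in V -> mobius Psi V <= PiL Psi y.
Proof.
move=> up_V Vy; rewrite PiL_mobius (bigD1 V) /= ?up_V // lerDl.
by apply: sumr_ge0 => W /andP[/andP[up_W _] _]; apply: mobius_ge0.
Qed.

Lemma mobius_eq0_in V y : PiL Psi y <= 0 -> isUp V -> y \in V -> mobius Psi V = 0.
Proof.
move=> PiL_le0 up_V Vy; apply/eqP; rewrite eq_le mobius_ge0 // andbT.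
exact: le_trans (mobius_le_PiL up_V Vy) PiL_le0.
Qed.

(* Every up-set containing y also contains y `|` v, and V contains y `|` v for v in V. *)
Lemma mobius_eq0_notin V y :
  (forall z, PiL Psi z <= PiL Psi y) -> isUp V -> y \notin V -> mobius Psi V = 0.
Proof.
move=> PiL_max up_V notVy; have /andP[/set0Pn[v Vv] _] := up_V.
have Vyv : (y `|` v)%O \in V by apply: isUp_closed up_V Vv (leUr v y).
have split_yv : PiL Psi (y `|` v)%O = PiL Psi y +
    \sum_(W | isUp W && ((y `|` v)%O \in W) && (y \notin W)) mobius Psi W.
  rewrite !PiL_mobius (bigID (fun W => y \in W)) /=; congr (_ + _).
  apply: eq_bigl => W; rewrite -andbA; apply: andb_id2l => up_W.
  by apply/andP/idP => [[] // | Wy]; rewrite (isUp_closed up_W Wy (leUl y v)).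
have : mobius Psi V <= \sum_(W | isUp W && ((y `|` v)%O \in W) && (y \notin W)) mobius Psi W.
  rewrite (bigD1 V) /= ?up_V ?Vyv // lerDl.
  by apply: sumr_ge0 => W /andP[/andP[/andP[up_W _] _] _]; apply: mobius_ge0.
move: (PiL_max (y `|` v)%O) (mobius_ge0 up_V); rewrite split_yv; lra.
Qed.

End MobiusInversion.

Lemma mobius_sum d (L : finLatticeType d) (R : realFieldType) (I : finType)
    (Ps : I -> {set L} -> R) U :
  mobius (fun U => \sum_i Ps i U) U = \sum_i mobius (Ps i) U.
Proof.
rewrite /mobius; elim: #|L|.+1 U => [|k IHk] U /=; first by rewrite big1.
rewrite sumrB exchange_big /=; congr (_ - _).
by apply: eq_bigr => V _; rewrite IHk.
Qed.

Section Lambda.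
Variables (d : Order.disp_t) (L : finLatticeType d) (R : realFieldType) (phi : L -> R).

Lemma pathval_cons a b s :
  pathval phi a (b :: s) = phi a - phi (a `|` b)%O + pathval phi b s.
Proof. by rewrite /pathval /= !big_cons /=; ring. Qed.

Hypothesis phi_mono : forall x y : L, (x <= y)%O -> phi x <= phi y.

Lemma pathval_le a s : pathval phi a s <= phi a.
Proof.
elim: s a => [|b s IHs] a; first by rewrite /pathval big_seq1 big_nil subr0.
by rewrite pathval_cons; move: (IHs b) (phi_mono (leUr b a)); lra.
Qed.

Lemma lam_le a b : lam phi a b <= phi a.
Proof.
have max_le (I : finType) (P : pred I) F : (forall i, P i -> F i <= phi a) ->
    \big[Num.max/pathval phi a (if a == b then [::] else [:: b])]_(i | P i) F i <= phi a.
  move=> F_le; apply: (big_ind (fun v => v <= phi a)) => //; first exact: pathval_le.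
  by move=> u v le_u le_v; rewrite ge_max le_u le_v.
by rewrite /lam; apply: (max_le) => m _; apply: (max_le) => t _; apply: pathval_le.
Qed.

Lemma lam_id a : lam phi a a = phi a.
Proof.
apply/eqP; rewrite eq_le lam_le /=.
have -> : phi a = pathval phi a (if a == a then [::] else [:: a]).
  by rewrite eqxx /pathval big_seq1 big_nil subr0.
apply: (big_rec (fun v => _ <= v)) => // m v _ le_v.
by rewrite le_max le_v orbT.
Qed.

Lemma Lam_id a : Lam a phi a = 0.
Proof. by rewrite /Lam lam_id subrr. Qed.

End Lambda.

Lemma mem_take_enum_ord n k (i : 'I_n) : (i \in take k (enum 'I_n)) = (i < k)%N.
Proof.
rewrite in_take ?mem_enum // -{1}(nth_ord_enum i i) index_uniq ?enum_uniq //.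
by rewrite size_enum_ord.
Qed.

Section PathPrefixes.
Variables (d : Order.disp_t) (L : finLatticeType d) (n : nat) (a : 'I_n -> L).

Lemma apref_allP k (P : pred L) :
  reflect (forall i : 'I_n, (i < k)%N -> P (a i)) (all P (apref a k)).
Proof.
rewrite /apref all_map; apply: (iffP allP) => Pa i.
  by rewrite -mem_take_enum_ord; apply: Pa.
by rewrite mem_take_enum_ord; apply: Pa.
Qed.

Lemma Lams_apref_S (R : realFieldType) (phi : L -> R) (i : 'I_n) :
  Lams (apref a i.+1) phi = Lam (a i) (Lams (apref a i) phi).
Proof.
rewrite /Lams /apref (take_nth i) ?size_enum_ord // map_rcons foldl_rcons.
by rewrite nth_ord_enum.
Qed.

End PathPrefixes.

Section Representation.
Variables (d : Order.disp_t) (L : finLatticeType d) (R : realFieldType).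
Variables (phi : L -> R) (n : nat) (a : 'I_n -> L) (Psi : 'I_n.+1 -> {set L} -> R).
Hypothesis Psi_cm : forall l, inMinf (Psi l).
Hypothesis PiL_Psi : forall i : 'I_n,
  PiL (Psi (widen_ord (leqnSn n) i)) = lam (Lams (apref a i) phi) (a i).
Hypothesis PiL_Psi_last : PiL (Psi ord_max) = Lams (apref a n) phi.

Lemma Lams_apref_sum m y : (m <= n)%N ->
  Lams (apref a m) phi y = \sum_(l < n.+1 | (m <= l)%N) PiL (Psi l) y.
Proof.
move=> le_mn; rewrite -(subKn le_mn); elim: (n - m)%N (leq_subr m n) => [|e IHe] le_en.
  rewrite subn0 -PiL_Psi_last (bigD1 ord_max) //= big1 ?addr0 // => l /andP[le_nl].
  by rewrite -val_eqE /= eqn_leq le_nl -ltnS ltn_ord.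
have lt_mn : (n - e.+1 < n)%N by lia.
pose i := Ordinal lt_mn.
have Si : i.+1 = (n - e)%N by rewrite /= subnSK.
change (n - e.+1)%N with (val i).
have := Lams_apref_S a phi i; rewrite Si => /(congr1 (fun f => f y)).
rewrite /Lam IHe; last exact: ltnW.
move/eqP; rewrite eq_sym subr_eq => /eqP ->.
rewrite [RHS](bigD1 (widen_ord (leqnSn n) i)) //= PiL_Psi addrC; congr (_ + _).
by apply: eq_bigl => l; rewrite -val_eqE /= -Si ltn_neqAle andbC eq_sym.
Qed.

Lemma Lams_apref_monotone m y z : (m <= n)%N -> (y <= z)%O ->
  Lams (apref a m) phi y <= Lams (apref a m) phi z.
Proof.
move=> le_mn le_yz; rewrite !Lams_apref_sum //.
by apply: ler_sum => l _; apply: PiL_monotone.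
Qed.

(* Pi(Psi_j) = lambda(phi_j; a_j, .) is maximal at a_j, where it equals phi_j(a_j). *)
Lemma mobius_Psi_eq0_notin (j : 'I_n) V : isUp V -> a j \notin V ->
  mobius (Psi (widen_ord (leqnSn n) j)) V = 0.
Proof.
apply: mobius_eq0_notin => // z; rewrite PiL_Psi lam_id.
  by apply: lam_le => x y; apply: Lams_apref_monotone; apply: ltnW.
by move=> x y; apply: Lams_apref_monotone; apply: ltnW.
Qed.

(* phi_{i+1}(a_i) = 0 bounds Pi(Psi_l)(a_i) for every l > i. *)
Lemma mobius_Psi_eq0_in (l : 'I_n.+1) (i : 'I_n) V : (i < l)%N -> isUp V -> a i \in V ->
  mobius (Psi l) V = 0.
Proof.
move=> lt_il; apply: mobius_eq0_in => //.
have : Lams (apref a i.+1) phi (a i) = 0.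
  rewrite Lams_apref_S Lam_id // => x y; apply: Lams_apref_monotone; exact: ltnW.
rewrite Lams_apref_sum // (bigD1 l) //= => /eqP; rewrite paddr_eq0 ?PiL_ge0 //.
  by case/andP => /eqP ->.
by apply: sumr_ge0 => l' _; apply: PiL_ge0.
Qed.

Lemma mobius_Psi_piX k (l : 'I_n.+1) x V : (k <= n)%N -> isUp V ->
  mobius (Psi l) V * piX x (apref a k) V
  = if (k <= l)%N && (x \in V) then mobius (Psi l) V else 0.
Proof.
move=> le_kn up_V; rewrite /piX.
have [-> | nzF] := eqVneq (mobius (Psi l) V) 0; first by rewrite mul0r; case: ifP.
have [le_kl | lt_lk] := leqP k l.
  have -> : all (fun b => b \notin V) (apref a k).
    apply/apref_allP => i lt_ik; apply: contra nzF => Vai.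
    by rewrite (mobius_Psi_eq0_in (i := i)) //; apply: leq_trans le_kl.
  by rewrite andbT; case: ifP; rewrite ?mulr1 ?mulr0.
have lt_ln : (l < n)%N := leq_trans lt_lk le_kn.
pose j := Ordinal lt_ln.
have Vaj : a j \in V.
  apply: contraR nzF => notVaj; have -> : l = widen_ord (leqnSn n) j by apply: val_inj.
  by rewrite mobius_Psi_eq0_notin.
have -> : all (fun b => b \notin V) (apref a k) = false.
  by apply/negbTE/apref_allP => /(_ j lt_lk); rewrite Vaj.
by rewrite andbF mulr0.
Qed.

Lemma Lams_apref_integ k x : (k <= n)%N ->
  Lams (apref a k) phi x = integ (fun U => \sum_(l < n.+1) Psi l U) (piX x (apref a k)).
Proof.
move=> le_kn; rewrite /integ Lams_apref_sum //.
under [RHS]eq_bigr => V up_V.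
  by rewrite mobius_sum mulr_suml; under eq_bigr do rewrite mobius_Psi_piX //; over.
rewrite exchange_big /= [RHS](bigID (fun l : 'I_n.+1 => (k <= l)%N)) /=.
rewrite [X in _ + X]big1 ?addr0 => [|l /negbTE lt_lk]; last first.
  by rewrite big1 // => V _; rewrite lt_lk.
apply: eq_bigr => l le_kl; rewrite PiL_mobius big_mkcondr.
by apply: eq_bigr => V _; rewrite le_kl.
Qed.

End Representation.

Theorem theorem3p15 (d : Order.disp_t) (L : finLatticeType d) (R : realFieldType)
    (phi : L -> R) (n : nat) (a : 'I_n -> L) (Psi : 'I_n.+1 -> {set L} -> R) :
  inM1 phi ->
  monotone_path a ->
  (forall i, inMinf (Psi i)) ->
  (forall i : 'I_n, PiL (Psi (widen_ord (leqnSn n) i)) =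
                    lam (Lams (apref a i) phi) (a i)) ->
  PiL (Psi ord_max) = Lams (apref a n) phi ->
  forall (x : L) (k : nat), (1 <= k <= n)%N ->
    Lams (apref a k) phi x =
    integ (fun U => \sum_(i < n.+1) Psi i U) (piX x (apref a k)).
Proof.
move=> _ _ Psi_cm PiL_Psi PiL_Psi_last x k /andP[_ le_kn].
exact: Lams_apref_integ.
Qed.
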